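(* Let $m\ge1$ and let $G=mK_2$ be the simple graph consisting of $m$ pairwise disjoint edges, whose vertices are among the variables of $S=\mathbb{K}[x_1,\dots,x_n]$, $\mathbb{K}$ a field. Then $\operatorname{sreg}(S/I(G))=\lceil m/2\rceil$.
   Context: For a simple graph $G$ with vertices identified with variables, $I(G)=(xy : \{x,y\}\in E(G))\subset S$ is its edge ideal. Stanley regularity: for a squarefree monomial ideal $I\subset S$, a squarefree Stanley decomposition of $S/I$ is a decomposition $S/I=\bigoplus_{i=1}^r u_i\mathbb{K}[Z_i]$ as $\mathbb{K}$-vector spaces, where $Z_i\subseteq\{x_1,\dots,x_n\}$, $u_i$ are (images of) squarefree monomials with $\operatorname{supp}(u_i)\subseteq Z_i$, and each $u_i\mathbb{K}[Z_i]$ is free over $\mathbb{K}[Z_i]$. Its Stanley regularity is $\max_i\deg(u_i)$, and $\operatorname{sreg}(S/I)$ is the minimum over all such decompositions. *)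

From mathcomp Require Import all_boot.
Set Implicit Arguments. Unset Strict Implicit. Unset Printing Implicit Defensive.

(* Variables x_1..x_n of S = K[x_1..x_n] are identified with 'I_n.
   A monomial x^a of S is its exponent vector a : 'I_n -> nat. *)
Definition monomial (n : nat) := 'I_n -> nat.

(* A simple graph on (a subset of) the variables is given by its edge set
   E : {set {set 'I_n}} (each edge a 2-element set).  The edge ideal
   I(G) = (x_i x_j : {i,j} in E) is a monomial ideal, so a monomial x^a lies
   in I(G) iff it is divisible by some generator x_i x_j. *)
Definition in_edge_ideal n (E : {set {set 'I_n}}) (a : monomial n) : Prop :=
  exists2 e, e \in E & forall x, x \in e -> 0 < a x.

(* The squarefree monomial u = prod_{x in U} x is encoded by its support U.
   x^a is a monomial of u K[Z] (i.e. x^a = u * w with supp w ⊆ Z) iff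
   a >= 1 on U and a = 0 outside Z (given U ⊆ Z). *)
Definition in_space n (p : {set 'I_n} * {set 'I_n}) (a : monomial n) : Prop :=
  (forall x, x \in p.1 -> 0 < a x) /\ (forall x, x \notin p.2 -> a x = 0).

(* A squarefree Stanley decomposition S/I = (+)_i u_i K[Z_i] of S/I(G),
   listed as D = [(U_1,Z_1); ...; (U_r,Z_r)] with u_i = prod_{x in U_i} x:
   - supp(u_i) ⊆ Z_i;
   - u_i K[Z_i] is free over K[Z_i] in S/I: no monomial u_i w (w in K[Z_i])
     lies in I;
   - the direct sum is all of S/I: every standard monomial (monomial not in
     I, these form a K-basis of S/I) lies in exactly one of the summands. *)
Definition stanley_dec n (E : {set {set 'I_n}})
    (D : seq ({set 'I_n} * {set 'I_n})) : Prop :=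
  [/\ forall p, p \in D -> p.1 \subset p.2,
      forall p, p \in D -> forall a, in_space p a -> ~ in_edge_ideal E a &
      forall a : monomial n, ~ in_edge_ideal E a ->
        exists! i : 'I_(size D), in_space (nth (set0, set0) D i) a].

Definition sdeg n (D : seq ({set 'I_n} * {set 'I_n})) : nat :=
  \max_(p <- D) #|p.1|.

Definition sreg_is n (E : {set {set 'I_n}}) (k : nat) : Prop :=
  (exists D, stanley_dec E D /\ sdeg D = k) /\
  (forall D, stanley_dec E D -> k <= sdeg D).

From mathcomp Require Import all_boot.
Set Implicit Arguments. Unset Strict Implicit. Unset Printing Implicit Defensive.

(* Upper bound: Stanley decompositions of S/I(G1) and S/I(G2) for graphs on
   disjoint vertex sets multiply summand by summand into one of S/I(G1 + G2),
   the degrees adding up; since S/I(K2) and S/I(2K2) have decompositions of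
   Stanley regularity 1, pairing up the edges gives ceil(m/2).
   Lower bound: let F range over the 2^m transversals of the matching and let
   u_F generate the summand containing x_F.  For each edge e, u_F or u_(F Δ e)
   meets e: otherwise x_(F \ e) lies in both summands, so they coincide and
   have both vertices of e among their free variables, which puts x_e in I.
   Counting the incidences between the u_F and the edges gives
   m 2^m <= 2 * 2^m * max |u_F|. *)

Lemma exists1_nth_countP (T : eqType) (d : T) (Q : T -> Prop) (P : pred T)
    (s : seq T) : (forall x, reflect (Q x) (P x)) ->
  (exists! i : 'I_(size s), Q (nth d s i)) <-> count P s = 1.
Proof.
move=> QP; have -> : count P s = #|[pred i : 'I_(size s) | P (nth d s i)]|.
  rewrite -sum1_count -{1}(mkseq_nth d s) /mkseq big_map.
  by rewrite -[size s]subn0 -/(index_iota 0 _) subn0 big_mkord sum1_card.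
split=> [[i [/QP Pi uniq_i]]|/eqP/card1P[i Hi]].
  apply/eqP/card1P; exists i => j; rewrite inE.
  by apply/idP/eqP => [/QP/uniq_i|->].
exists i; split=> [|j /QP Pj]; first by have := Hi i; rewrite !inE eqxx => /QP.
by have := Hi j; rewrite !inE /= Pj => /esym/eqP.
Qed.

Lemma count_eq1_eq (T : eqType) (P : pred T) (s : seq T) x y :
  count P s = 1 -> x \in s -> y \in s -> P x -> P y -> x = y.
Proof.
move=> Ps1 xs ys Px Py; have := mem_filter P x s; have := mem_filter P y s.
rewrite Px Py xs ys; have : size (filter P s) = 1 by rewrite size_filter.
by case: (filter P s) => [|z []] // _; rewrite !inE => /eqP -> /eqP ->.
Qed.

Lemma disjoint_cover_setD (T : finType) (P Q : {set {set T}}) :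
  trivIset P -> Q \subset P -> [disjoint cover Q & cover (P :\: Q)].
Proof.
move=> /trivIsetP tP /subsetP sQP; apply: bigcup_disjoint => B; rewrite inE.
move=> /andP[BnQ BP]; rewrite disjoint_sym; apply: bigcup_disjoint => A AQ.
by apply: tP => //; [exact: sQP | apply: contraNneq BnQ => ->].
Qed.

Lemma cover2 (T : finType) (A B : {set T}) : cover [set A; B] = A :|: B.
Proof. by rewrite /cover bigcup_setU !big_set1. Qed.

Lemma card_setI_cover (T : finType) (P : {set {set T}}) (U : {set T}) :
  trivIset P -> \sum_(A in P) #|U :&: A| = #|U :&: cover P|.
Proof.
move=> tP; rewrite -sum1_card (eq_bigl [pred x in cover P | x \in U]) => [|x].
  rewrite big_trivIset_cond //; apply: eq_bigr => A _.
  by rewrite -sum1_card; apply: eq_bigl => x; rewrite !inE andbC.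
by rewrite !inE andbC.
Qed.

Section StanleyDecompositions.
Variable n : nat.
Implicit Types (E : {set {set 'I_n}}) (V F e f : {set 'I_n})
  (p q : {set 'I_n} * {set 'I_n}) (D : seq ({set 'I_n} * {set 'I_n})) (a : monomial n).

Definition in_spaceb p a : bool :=
  [forall x, (x \in p.1) ==> (0 < a x)] && [forall x, (x \notin p.2) ==> (a x == 0)].

Lemma in_spaceP p a : reflect (in_space p a) (in_spaceb p a).
Proof.
apply: (iffP andP) => [[/forallP H1 /forallP H2]|[H1 H2]]; split.
- by move=> x /(implyP (H1 x)).
- by move=> x /(implyP (H2 x))/eqP.
- by apply/forallP => x; apply/implyP/H1.
- by apply/forallP => x; apply/implyP => /H2 ->.
Qed.

Lemma stanley_decP E D : stanley_dec E D <->
  [/\ forall p, p \in D -> p.1 \subset p.2,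
      forall p, p \in D -> forall a, in_space p a -> ~ in_edge_ideal E a &
      forall a, ~ in_edge_ideal E a -> count (in_spaceb^~ a) D = 1].
Proof.
have cntP a := exists1_nth_countP (set0, set0) D (in_spaceP^~ a).
by split=> -[sub free cov]; split=> // a /cov /cntP.
Qed.

Lemma in_edge_idealU E1 E2 a :
  in_edge_ideal (E1 :|: E2) a <-> in_edge_ideal E1 a \/ in_edge_ideal E2 a.
Proof.
split=> [[e]|[][e eE ea]]; last 2 first.
- by exists e; rewrite // inE eE.
- by exists e; rewrite // inE eE orbT.
by rewrite inE => /orP[] eE ea; [left | right]; exists e.
Qed.

Lemma leq_sdeg D p : p \in D -> #|p.1| <= sdeg D.
Proof. by move=> pD; apply: leq_bigmax_seq. Qed.

(* u K[Z] * u' K[Z'] = u u' K[Z :&: Z'] *)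
Definition space_mul p q := (p.1 :|: q.1, p.2 :&: q.2).

Lemma in_spaceb_mul p q a : in_spaceb (space_mul p q) a = in_spaceb p a && in_spaceb q a.
Proof.
apply/in_spaceP/andP => [[H1 H2]|[/in_spaceP[H1 H2] /in_spaceP[H3 H4]]]; split.
- apply/in_spaceP; split=> x xp; first by apply: H1; rewrite inE xp.
  by apply: H2; rewrite inE (negbTE xp).
- apply/in_spaceP; split=> x xp; first by apply: H1; rewrite inE xp orbT.
  by apply: H2; rewrite inE (negbTE xp) andbF.
- by move=> x /setUP[/H1|/H3].
- by move=> x; rewrite inE negb_and => /orP[/H2|/H4].
Qed.

Lemma count_space_mul D1 D2 a :
  count (in_spaceb^~ a) [seq space_mul p q | p <- D1, q <- D2] =
  count (in_spaceb^~ a) D1 * count (in_spaceb^~ a) D2.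
Proof.
elim: D1 => //= p D1 IH; rewrite count_cat IH count_map mulnDl; congr (_ + _).
rewrite (eq_count (a2 := fun q => in_spaceb p a && in_spaceb q a)) => [|q]; last first.
  by rewrite /= in_spaceb_mul.
by case: (in_spaceb p a); rewrite ?mul1n ?mul0n ?count_pred0.
Qed.

Lemma sdeg_allpairs_mul D1 D2 :
  sdeg [seq space_mul p q | p <- D1, q <- D2] <= sdeg D1 + sdeg D2.
Proof.
apply/bigmax_leqP_seq => _ /allpairsP[[p q] [/= pD qD ->]] _.
exact: leq_trans (leq_card_setU _ _).1 (leq_add (leq_sdeg pD) (leq_sdeg qD)).
Qed.

(* Generators inside V and all variables outside V free: this is what makes
   the product of such decompositions on disjoint V a decomposition again. *)
Definition stanley_dec_on E V D :=
  stanley_dec E D /\ {in D, forall p, (p.1 \subset V) && (~: V \subset p.2)}.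

Lemma stanley_dec_on_setU E1 E2 V1 V2 D1 D2 : [disjoint V1 & V2] ->
  stanley_dec_on E1 V1 D1 -> stanley_dec_on E2 V2 D2 ->
  stanley_dec_on (E1 :|: E2) (V1 :|: V2) [seq space_mul p q | p <- D1, q <- D2].
Proof.
move=> V12 [/stanley_decP[sub1 free1 cov1] on1] [/stanley_decP[sub2 free2 cov2] on2].
have V21 : V2 \subset ~: V1 by rewrite -disjoints_subset disjoint_sym.
rewrite disjoints_subset in V12.
split; last first.
  move=> _ /allpairsP[[p q] [/= pD qD ->]]; have /andP[? ?] := on1 p pD.
  by have /andP[? ?] := on2 q qD; rewrite setUSS // setCU setISS.
apply/stanley_decP; split=> [_ /allpairsP[[p q] [/= pD qD ->]]|
                             _ /allpairsP[[p q] [/= pD qD ->]] a /in_spaceP|a].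
- have /andP[p1V1 nV1p2] := on1 p pD; have /andP[q1V2 nV2q2] := on2 q qD.
  have p1q2 := subset_trans p1V1 (subset_trans V12 nV2q2).
  have q1p2 := subset_trans q1V2 (subset_trans V21 nV1p2).
  by rewrite /= subUset !subsetI (sub1 _ pD) (sub2 _ qD) p1q2 q1p2.
- rewrite in_spaceb_mul => /andP[/in_spaceP ap /in_spaceP aq] /in_edge_idealU.
  by case; [apply: free1 ap | apply: free2 aq].
- move=> aE; rewrite count_space_mul cov1 ?cov2 // => aEi; apply: aE;
    apply/in_edge_idealU; by [right | left].
Qed.

Definition box (su sw : seq 'I_n) := ([set x in su], ~: [set x in sw]).

Lemma in_spaceb_box su sw a :
  in_spaceb (box su sw) a = all (fun x => 0 < a x) su && all (fun x => a x == 0) sw.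
Proof.
apply/in_spaceP/andP => [[H1 H2]|[/allP H1 /allP H2]]; split.
- by apply/allP => x xs; apply: H1; rewrite inE.
- by apply/allP => x xs; rewrite H2 // !inE negbK.
- by move=> x; rewrite inE => /H1.
- by move=> x; rewrite !inE negbK => /H2/eqP.
Qed.

Lemma box_subset su sw : ((box su sw).1 \subset (box su sw).2) = all [predC sw] su.
Proof.
apply/subsetP/allP => /= H x; first by move=> xs; have := H x; rewrite !inE; apply.
by rewrite !inE => /H.
Qed.

Lemma box_onE su sw V :
  ((box su sw).1 \subset V) && (~: V \subset (box su sw).2) = all [in V] (su ++ sw).
Proof.
have seqsetE s : ([set x in s] \subset V) = all [in V] s.
  by apply/subsetP/allP => sV x xs; apply: sV; rewrite ?inE in xs *.
by rewrite /= setCS all_cat !seqsetE.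
Qed.

Lemma stanley_decI E D (inI : pred (monomial n)) :
  (forall a, reflect (in_edge_ideal E a) (inI a)) ->
  (forall p, p \in D -> p.1 \subset p.2) ->
  (forall a, count (in_spaceb^~ a) D = ~~ inI a) -> stanley_dec E D.
Proof.
move=> inIP sub cnt; apply/stanley_decP.
split=> // [p pD a /in_spaceP ap /inIP aI|a /inIP].
  move: (cnt a); rewrite aI => /eqP; rewrite eqn0Ngt -has_count.
  by move=> /hasPn/(_ p pD); rewrite ap.
by rewrite cnt => /negbTE ->.
Qed.

Lemma in_edge_ideal2P (x y z t : 'I_n) a :
  reflect (in_edge_ideal [set [set x; y]; [set z; t]] a)
          ((0 < a x) && (0 < a y) || (0 < a z) && (0 < a t)).
Proof.
apply: (iffP idP) => [/orP[]/andP[ax ay]|[e /set2P[]-> ae]].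
- by exists [set x; y]; rewrite ?set21 // => ? /set2P[]->.
- by exists [set z; t]; rewrite ?set22 // => ? /set2P[]->.
- by rewrite (ae x) ?(ae y) ?set21 ?set22.
- by rewrite (ae z) ?(ae t) ?set21 ?set22 ?orbT.
Qed.

Lemma in_edge_ideal1P (x y : 'I_n) a :
  reflect (in_edge_ideal [set [set x; y]] a) ((0 < a x) && (0 < a y)).
Proof. by have := in_edge_ideal2P x y x y a; rewrite setUid orbb. Qed.

Definition dec_empty := [:: box [::] [::]].

Lemma stanley_dec_on_empty : stanley_dec_on set0 set0 dec_empty.
Proof.
split; last by apply/allP; rewrite /= box_onE.
apply: (stanley_decI (inI := pred0)) => [a|p|a]; last by rewrite /= in_spaceb_box.
  by apply: ReflectF => -[e]; rewrite inE.
by rewrite inE => /eqP ->; rewrite box_subset.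
Qed.

Lemma sdeg_dec_empty : sdeg dec_empty = 0.
Proof. by rewrite /sdeg big_seq1 /= set_nil cards0. Qed.

Definition dec_edge (x y : 'I_n) := [:: box [::] [:: y]; box [:: y] [:: x]].

Lemma stanley_dec_on_edge (x y : 'I_n) : x != y ->
  stanley_dec_on [set [set x; y]] [set x; y] (dec_edge x y).
Proof.
move=> xy; split.
  apply: (stanley_decI (in_edge_ideal1P x y)) => [|a].
    by apply/allP; rewrite /= !box_subset /= !inE eq_sym xy.
  by rewrite /= !in_spaceb_box /= !eqn0Ngt; case: (0 < a x); case: (0 < a y).
by apply/allP; rewrite /= !box_onE /= !inE !eqxx ?orbT.
Qed.

Lemma sdeg_dec_edge (x y : 'I_n) : sdeg (dec_edge x y) <= 1.
Proof.
by rewrite /sdeg !big_cons big_nil /= !geq_max !cardsE !(leq_trans (card_size _)).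
Qed.

(* Of the nine independent subsets of {x, y, z, t}, the first summand takes {}
   and each other one the two containing its generator:
   {x}, {x,z}; {t}, {x,t}; {y}, {y,t}; {z}, {y,z}. *)
Definition dec_2edges (x y z t : 'I_n) :=
  [:: box [::] [:: x; y; z; t]; box [:: x] [:: y; t]; box [:: t] [:: y; z];
      box [:: y] [:: x; z]; box [:: z] [:: x; t]].

Lemma stanley_dec_on_2edges (x y z t : 'I_n) : uniq [:: x; y; z; t] ->
  stanley_dec_on [set [set x; y]; [set z; t]] ([set x; y] :|: [set z; t])
    (dec_2edges x y z t).
Proof.
move=> uxyzt; split.
  apply: (stanley_decI (in_edge_ideal2P x y z t)) => [|a].
    apply/allP; rewrite /= !box_subset /= !inE !andbT.
    move: uxyzt; rewrite /= !inE !negb_or => /and4P[/and3P[xy xz xt] /andP[yz yt] zt _].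
    by rewrite !(eq_sym t) (eq_sym y x) (eq_sym z x) xy xt yz zt yt xz.
  rewrite /= !in_spaceb_box /= !eqn0Ngt.
  by case: (0 < a x); case: (0 < a y); case: (0 < a z); case: (0 < a t).
by apply/allP; rewrite /= !box_onE /= !inE !eqxx ?orbT.
Qed.

Lemma sdeg_dec_2edges (x y z t : 'I_n) : sdeg (dec_2edges x y z t) <= 1.
Proof.
by rewrite /sdeg !big_cons big_nil /= !geq_max !cardsE !(leq_trans (card_size _)).
Qed.

Lemma exists_stanley_dec_on_edge e : #|e| = 2 ->
  exists D, stanley_dec_on [set e] (cover [set e]) D /\ sdeg D <= 1.
Proof.
move/eqP/cards2P => [x [y [xy ->]]]; exists (dec_edge x y).
by rewrite cover1 sdeg_dec_edge; split=> //; apply: stanley_dec_on_edge.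
Qed.

Lemma uniq_2edges (x y z t : 'I_n) : x != y -> z != t ->
  [disjoint [set x; y] & [set z; t]] -> uniq [:: x; y; z; t].
Proof.
move=> xy zt dj; have := disjointFr dj (set21 x y); have := disjointFr dj (set22 x y).
by rewrite /= !inE => -> ->; rewrite !orbF xy zt.
Qed.

Lemma exists_stanley_dec_on_2edges e f : #|e| = 2 -> #|f| = 2 -> [disjoint e & f] ->
  exists D, stanley_dec_on [set e; f] (cover [set e; f]) D /\ sdeg D <= 1.
Proof.
move=> /eqP/cards2P[x [y [xy ->]]] /eqP/cards2P[z [t [zt ->]]] dj.
exists (dec_2edges x y z t).
by rewrite cover2 sdeg_dec_2edges; split=> //; apply/stanley_dec_on_2edges/uniq_2edges.
Qed.

Lemma matching_stanley_dec E : (forall e, e \in E -> #|e| = 2) -> trivIset E ->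
  exists D, stanley_dec_on E (cover E) D /\ sdeg D <= uphalf #|E|.
Proof.
have [k] := ubnP #|E|; elim: k E => // k IH E ltE card2 tE.
case: (leqP #|E| 1) => [|E_gt1].
  case: (posnP #|E|) => [/cards0_eq-> _|E_gt0 E_le1].
    exists dec_empty; rewrite /cover big_set0 sdeg_dec_empty.
    by split=> //; apply: stanley_dec_on_empty.
  have /cards1P[e defE] : #|E| == 1 by rewrite eqn_leq E_le1.
  by rewrite defE cards1; apply/exists_stanley_dec_on_edge/card2; rewrite defE set11.
have [e [f [eE fE ef]]] := card_gt1P E_gt1.
have [m Em] : exists m, #|E| = m.+2 by exists #|E|.-2; case: #|E| E_gt1 => [|[]].
set P := [set e; f]; have PE : P \subset E by rewrite subUset !sub1set eE fE.
have [D1 [on1 le1]] : exists D, stanley_dec_on P (cover P) D /\ sdeg D <= 1.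
  by apply: exists_stanley_dec_on_2edges; rewrite ?card2 //; apply: (trivIsetP tE).
have cardEP : #|E :\: P| = m by rewrite cardsD (setIidPr PE) cards2 ef Em subSS subn1.
have [|||D2 [on2 le2]] := IH (E :\: P); rewrite ?cardEP ?trivIsetD //.
- by move: ltE; rewrite Em => /ltnW.
- by move=> g; rewrite inE => /andP[_ /card2].
have defE : P :|: E :\: P = E by rewrite -{2}(setID E P) (setIidPr PE).
have := stanley_dec_on_setU (disjoint_cover_setD tE PE) on1 on2.
rewrite -bigcup_setU defE => onE.
exists [seq space_mul p q | p <- D1, q <- D2]; split=> //.
apply: leq_trans (sdeg_allpairs_mul _ _) _.
by rewrite Em -[uphalf _]/(1 + uphalf m) -cardEP; apply: leq_add.
Qed.

Definition sqfree F : monomial n := fun x => x \in F.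

Lemma in_spaceb_sqfree p F : in_spaceb p (sqfree F) = (p.1 \subset F) && (F \subset p.2).
Proof.
apply/in_spaceP/andP => [[H1 H2]|[/subsetP H1 /subsetP H2]]; split.
- by apply/subsetP => x /H1; rewrite lt0b.
- by apply/subsetP => x xF; apply/negPn/negP => /H2/eqP; rewrite /sqfree xF.
- by move=> x /H1; rewrite /sqfree lt0b.
- by move=> x xp2; apply/eqP; rewrite eqb0; apply: contra xp2; apply: H2.
Qed.

Lemma in_edge_ideal_sqfree E F :
  in_edge_ideal E (sqfree F) <-> exists2 e, e \in E & e \subset F.
Proof.
split=> -[e eE eF]; exists e => //; first by apply/subsetP => x /eF; rewrite lt0b.
by move=> x /(subsetP eF); rewrite /sqfree lt0b.
Qed.

Lemma in_space_sqfree_setD p F e : p.1 :&: e = set0 ->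
  in_spaceb p (sqfree F) -> in_spaceb p (sqfree (F :\: e)).
Proof.
rewrite !in_spaceb_sqfree => p1e0 /andP[p1F Fp2].
rewrite (subset_trans (subsetDl F e) Fp2) andbT setDE subsetI p1F.
by rewrite -disjoints_subset -setI_eq0 p1e0 eqxx.
Qed.

Definition symdiff F e := (F :\: e) :|: (e :\: F).

Lemma symdiffK e : involutive (symdiff^~ e).
Proof. by move=> F; apply/setP => x; rewrite !inE; case: (x \in F); case: (x \in e). Qed.

Lemma symdiff_setD F e : symdiff F e :\: e = F :\: e.
Proof. by apply/setP => x; rewrite !inE; case: (x \in F); case: (x \in e). Qed.

Lemma symdiff_setI F e : symdiff F e :&: e = e :\: F.
Proof. by apply/setP => x; rewrite !inE; case: (x \in F); case: (x \in e). Qed.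

Lemma symdiff_setIC F e e' : [disjoint e & e'] -> symdiff F e :&: e' = F :&: e'.
Proof.
move=> ee'; apply/setP => x; rewrite !inE; case xe': (x \in e'); rewrite ?andbF //.
by rewrite (disjointFl ee' xe'); case: (x \in F).
Qed.

Section LowerBound.
Variables (E : {set {set 'I_n}}) (D : seq ({set 'I_n} * {set 'I_n})).
Hypotheses (card2 : forall e, e \in E -> #|e| = 2) (tE : trivIset E)
  (decD : stanley_dec E D).

Definition transversals := [set F | [forall e in E, #|F :&: e| == 1]].

Lemma transversal_standard F : F \in transversals -> ~ in_edge_ideal E (sqfree F).
Proof.
rewrite inE => /forall_inP F1 /in_edge_ideal_sqfree[e eE eF].
by have := F1 e eE; rewrite (setIidPr eF) card2.
Qed.

Lemma no_edge_free p e : p \in D -> e \in E -> ~~ (e \subset p.2).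
Proof.
move=> pD eE; apply/negP => ep2; case: decD => sub free _.
apply: (free p pD (sqfree p.2)).
  by apply/in_spaceP; rewrite in_spaceb_sqfree sub ?subxx.
by apply/in_edge_ideal_sqfree; exists e.
Qed.

Definition summand a := nth (set0, set0) D (find (in_spaceb^~ a) D).

Lemma has_summand a : ~ in_edge_ideal E a -> has (in_spaceb^~ a) D.
Proof. by case/stanley_decP: decD => _ _ cov /cov; rewrite has_count => ->. Qed.

Lemma mem_summand a : ~ in_edge_ideal E a -> summand a \in D.
Proof. by move/has_summand; rewrite has_find; apply: mem_nth. Qed.

Lemma in_summand a : ~ in_edge_ideal E a -> in_spaceb (summand a) a.
Proof. by move/has_summand; apply: nth_find. Qed.

Lemma summand_unique a p : ~ in_edge_ideal E a -> p \in D -> in_spaceb p a ->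
  p = summand a.
Proof.
move=> aS pD pa; case/stanley_decP: decD => _ _ /(_ a aS) cnt.
exact: count_eq1_eq cnt pD (mem_summand aS) pa (in_summand aS).
Qed.

Definition generator F := (summand (sqfree F)).1.

Lemma transversal_symdiff e F : e \in E -> F \in transversals ->
  symdiff F e \in transversals.
Proof.
move=> eE; rewrite !inE => /forall_inP F1; apply/forall_inP => e' e'E.
case: (eqVneq e' e) => [->|e'e].
  by rewrite symdiff_setI cardsD setIC (eqP (F1 e eE)) card2.
by rewrite symdiff_setIC ?F1 // (trivIsetP tE) // eq_sym.
Qed.

Lemma generator_meets_edge e F : e \in E -> F \in transversals ->
  0 < #|generator F :&: e| + #|generator (symdiff F e) :&: e|.
Proof.
move=> eE FT; have FeT := transversal_symdiff eE FT.
have [FS FeS] := (transversal_standard FT, transversal_standard FeT).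
rewrite addn_gt0 !card_gt0; apply/negPn/negP; rewrite negb_or !negbK.
move=> /andP[/eqP gF /eqP gFe].
have FdS : ~ in_edge_ideal E (sqfree (F :\: e)).
  move=> /in_edge_ideal_sqfree[e' e'E e'F]; apply: FS.
  by apply/in_edge_ideal_sqfree; exists e'; rewrite // (subset_trans e'F) ?subsetDl.
have sF := in_space_sqfree_setD gF (in_summand FS).
have := in_space_sqfree_setD gFe (in_summand FeS); rewrite symdiff_setD => sFe.
have same := etrans (summand_unique FdS (mem_summand FS) sF)
                    (esym (summand_unique FdS (mem_summand FeS) sFe)).
apply: (negP (no_edge_free (mem_summand FS) eE)).
move: (in_summand FS) (in_summand FeS); rewrite -same !in_spaceb_sqfree.
move=> /andP[_ /subsetP Fp] /andP[_ /subsetP Fep]; apply/subsetP => x xe.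
by case xF: (x \in F); [apply: Fp | apply: Fep; rewrite !inE xF xe].
Qed.

Lemma sum_card_generator_setI F : F \in transversals ->
  \sum_(e in E) #|generator F :&: e| <= sdeg D.
Proof.
move=> /transversal_standard FS; rewrite card_setI_cover //.
exact: leq_trans (subset_leq_card (subsetIl _ _)) (leq_sdeg (mem_summand FS)).
Qed.

Lemma card_transversals_le e : e \in E ->
  #|transversals| <= 2 * \sum_(F in transversals) #|generator F :&: e|.
Proof.
move=> eE; have flip_sum :
    \sum_(F in transversals) #|generator (symdiff F e) :&: e| =
    \sum_(F in transversals) #|generator F :&: e|.
  rewrite [RHS](reindex_inj (inv_inj (symdiffK e))); apply: eq_bigl => F.
  apply/idP/idP => [|/(transversal_symdiff eE)]; first exact: transversal_symdiff.
  by rewrite symdiffK.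
rewrite mul2n -addnn -{2}flip_sum -big_split -sum1_card leq_sum // => F FT.
exact: generator_meets_edge.
Qed.

Lemma transversals_gt0 : 0 < #|transversals|.
Proof.
apply/card_gt0P; exists [set x | [pick y in pblock E x] == Some x].
rewrite inE; apply/forall_inP => e eE.
have [y ye pick_e] : exists2 y, y \in e & [pick z in e] = Some y.
  case: pickP => [y ye|e0]; first by exists y.
  by have := card2 eE; rewrite (eq_card0 e0).
suff -> : [set x | [pick y in pblock E x] == Some x] :&: e = [set y] by rewrite cards1.
apply/setP => x; rewrite !inE; case xe: (x \in e); rewrite ?andbF ?andbT.
  by rewrite (def_pblock tE eE xe) pick_e eq_sym.
by apply/esym/negbTE; apply: contraFneq xe => ->.
Qed.

Lemma lower_bound : uphalf #|E| <= sdeg D.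
Proof.
have per_edge : \sum_(e in E) #|transversals| <=
    \sum_(e in E) 2 * \sum_(F in transversals) #|generator F :&: e|.
  by apply: leq_sum => e; apply: card_transversals_le.
rewrite leq_uphalf_double -mul2n -(leq_pmul2r transversals_gt0) -sum_nat_const.
apply: leq_trans per_edge _; rewrite -big_distrr -mulnA leq_mul2l /= exchange_big /=.
by rewrite mulnC -sum_nat_const; apply: leq_sum => F; apply: sum_card_generator_setI.
Qed.

End LowerBound.

End StanleyDecompositions.

Theorem corollary5p3 (n m : nat) (E : {set {set 'I_n}}) :
  1 <= m ->
  #|E| = m ->
  (forall e, e \in E -> #|e| = 2) ->
  trivIset E ->
  sreg_is E (uphalf m).
Proof.
(* The bound also holds for m = 0. *)
move=> _ <- card2 tE; have lower D : stanley_dec E D -> uphalf #|E| <= sdeg D.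
  exact: lower_bound.
split=> //; have [D [[decD _] leD]] := matching_stanley_dec card2 tE.
by exists D; split=> //; apply/eqP; rewrite eqn_leq leD lower.
Qed.
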